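(* Let $\mathcal{G}=(\mathcal{N},\mathcal{E})$ be a connected undirected graph with $\mathcal{N}=\{1,\dots,N\}$, $\omega_1,\dots,\omega_N\in\mathbb{R}$, and $\{\Delta_{ij}\}$ a formation (real $\Delta_{ij}$ for each ordered pair with $\{i,j\}\in\mathcal{E}$, $\Delta_{ji}=-\Delta_{ij}$) with $\Delta_{ij}\not\equiv 0,\pi\pmod{2\pi}$ for all edges. Let $\bar\omega\in\mathbb{R}$, let $\mathcal{E}=\mathcal{E}^a\sqcup\mathcal{E}^r$ be a partition, $\mathcal{N}_i^a=\{j:\{i,j\}\in\mathcal{E}^a\}$, $\mathcal{N}_i^r=\{j:\{i,j\}\in\mathcal{E}^r\}$, and fix one attractive coupling function $f^*$ and one repulsive coupling function $g^*$. Put $f^*_{ij}:=f^*(\Delta_{ij})$ for $j\in\mathcal{N}_i^a$ and $g^*_{ij}:=g^*(\Delta_{ij})$ for $j\in\mathcal{N}_i^r$, and define $\mathcal{N}_i^{a,+}=\{j\in\mathcal{N}_i^a:\operatorname{sgn}(\bar\omega-\omega_i)=\operatorname{sgn}(f^*_{ij})\}$, $\mathcal{N}_i^{a,-}=\{j\in\mathcal{N}_i^a:\operatorname{sgn}(\bar\omega-\omega_i)=-\operatorname{sgn}(f^*_{ij})\}$, $\mathcal{N}_i^{r,+}=\{j\in\mathcal{N}_i^r:\operatorname{sgn}(\bar\omega-\omega_i)=\operatorname{sgn}(g^*_{ij})\}$, $\mathcal{N}_i^{r,-}=\{j\in\mathcal{N}_i^r:\operatorname{sgn}(\bar\omega-\omega_i)=-\operatorname{sgn}(g^*_{ij})\}$.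 Assume that for each $i\in\mathcal{N}$ the set $\mathcal{N}_i^+:=\mathcal{N}_i^{a,+}\cup\mathcal{N}_i^{r,+}$ is non-empty, and let $S_i:=\sum_{j\in\mathcal{N}_i^{a,+}}(f^*_{ij})^2+\sum_{j\in\mathcal{N}_i^{r,+}}(g^*_{ij})^2$. Consider the equations $$(\ast)\qquad \bar\omega-\omega_i=\sum_{j\in\mathcal{N}_i^a}\alpha_{ij}f^*_{ij}+\sum_{j\in\mathcal{N}_i^r}\beta_{ij}g^*_{ij},\qquad i\in\mathcal{N},$$ in unknowns $\alpha_{ij}$ ($i\in\mathcal{N}$, $j\in\mathcal{N}_i^a$) and $\beta_{ij}$ ($i\in\mathcal{N}$, $j\in\mathcal{N}_i^r$), with energy $E(\alpha,\beta)=\sum_{i\in\mathcal{N}}\big(\sum_{j\in\mathcal{N}_i^a}\alpha_{ij}^2+\sum_{j\in\mathcal{N}_i^r}\beta_{ij}^2\big)$. Then: (i) there exist $\alpha_{ij}>0$ and $\beta_{ij}>0$ satisfying $(\ast)$; (ii) for $\epsilon>0$ define $\alpha^\epsilon_{ij}=\epsilon$ for $j\in\mathcal{N}_i^{a,-}$, $\alpha^\epsilon_{ij}=|\bar\omega-\omega_i|\,|f^*_{ij}|/S_i$ for $j\in\mathcal{N}_i^{a,+}$, $\beta^\epsilon_{ij}=\epsilon$ for $j\in\mathcal{N}_i^{r,-}$, $\beta^\epsilon_{ij}=|\bar\omega-\omega_i|\,|g^*_{ij}|/S_i$ for $j\in\mathcal{N}_i^{r,+}$. Then every positive solution $(\alpha,\beta)$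 of $(\ast)$ satisfies $E(\alpha,\beta)\ge E_0:=\sum_{i\in\mathcal{N}}(\bar\omega-\omega_i)^2/S_i$, the infimum of $E$ over positive solutions of $(\ast)$ equals $E_0$, and as $\epsilon\to 0^+$ the family $(\alpha^\epsilon,\beta^\epsilon)$ satisfies $(\ast)$ up to an error tending to $0$ and $E(\alpha^\epsilon,\beta^\epsilon)\to E_0$; i.e. $(\alpha^\epsilon,\beta^\epsilon)$ is a minimum-energy solution up to arbitrary precision.
   Context: An attractive coupling function is a $2\pi$-periodic function $f:\mathbb{R}\to\mathbb{R}$, twice differentiable on $(-\pi,\pi)$, with $f(0)=0$, $f'>0$ on $(-\pi,\pi)$, $f(t)\to-\infty$ as $t\to(2n+1)\pi^+$ and $f(t)\to+\infty$ as $t\to(2n+1)\pi^-$ for every integer $n$. A repulsive coupling function is a $2\pi$-periodic $g:\mathbb{R}\to\mathbb{R}$, twice differentiable on $(0,2\pi)$, with $g(\pi)=0$, $g'>0$ on $(0,2\pi)$, $g(t)\to-\infty$ as $t\to 2n\pi^+$ and $g(t)\to+\infty$ as $t\to 2n\pi^-$ for every integer $n$. The coupling functions on the network are the scaled prototypes $f_{ij}=\alpha_{ij}f^*$ (attractive edges) and $g_{ij}=\beta_{ij}g^*$ (repulsive edges), so $(\ast)$ is the condition that the formation moving rigidly with frequency $\bar\omega$ solves $\dot\theta_i=\omega_i+\sum_{j\in\mathcal{N}_i^a}f_{ij}(\theta_j-\theta_i)+\sum_{j\in\mathcal{N}_i^r}g_{ij}(\theta_j-\theta_i)$. Here $\operatorname{sgn}$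 is the sign function with $\operatorname{sgn}(0)=0$. *)

From HB Require Import structures.
From mathcomp Require Import all_boot all_order all_algebra.
From mathcomp Require Import all_classical all_reals all_analysis.
Set Implicit Arguments. Unset Strict Implicit. Unset Printing Implicit Defensive.
Import Order.TTheory GRing.Theory Num.Theory.
Import numFieldNormedType.Exports.
Local Open Scope classical_set_scope.
Local Open Scope ring_scope.

Definition attractive {R : realType} (f : R -> R) : Prop :=
  [/\ (forall t, f (t + 2 * pi) = f t),
      (forall t, - pi < t < pi -> derivable f t 1 /\ derivable (derive1 f) t 1),
      f 0 = 0,
      (forall t, - pi < t < pi -> 0 < derive1 f t) &
      (forall n : int,
          f x @[x --> ((2 * n%:~R + 1) * pi)^'+] --> -oo /\
          f x @[x --> ((2 * n%:~R + 1) * pi)^'-] --> +oo)].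

Definition repulsive {R : realType} (g : R -> R) : Prop :=
  [/\ (forall t, g (t + 2 * pi) = g t),
      (forall t, 0 < t < 2 * pi -> derivable g t 1 /\ derivable (derive1 g) t 1),
      g pi = 0,
      (forall t, 0 < t < 2 * pi -> 0 < derive1 g t) &
      (forall n : int,
          g x @[x --> (2 * n%:~R * pi)^'+] --> -oo /\
          g x @[x --> (2 * n%:~R * pi)^'-] --> +oo)].

Definition undirected_graph {N : nat} (E : rel 'I_N) : Prop :=
  (forall i j, E i j = E j i) /\ (forall i, ~~ E i i).

Definition connected_graph {N : nat} (E : rel 'I_N) : Prop :=
  forall i j : 'I_N, connect E i j.

Definition formation {R : realType} {N : nat} (E : rel 'I_N)
  (Delta : 'I_N -> 'I_N -> R) : Prop :=
  forall i j, E i j -> Delta j i = - Delta i j.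

Definition not_0_pi_mod_2pi {R : realType} (d : R) : Prop :=
  forall k : int, d <> 2 * k%:~R * pi /\ d <> pi + 2 * k%:~R * pi.

Definition Nap {R : realType} {N : nat} (Ea : rel 'I_N) (w : 'I_N -> R) (wb : R)
  (Delta : 'I_N -> 'I_N -> R) (fs : R -> R) (i j : 'I_N) : bool :=
  Ea i j && (Num.sg (wb - w i) == Num.sg (fs (Delta i j))).
Definition Nam {R : realType} {N : nat} (Ea : rel 'I_N) (w : 'I_N -> R) (wb : R)
  (Delta : 'I_N -> 'I_N -> R) (fs : R -> R) (i j : 'I_N) : bool :=
  Ea i j && (Num.sg (wb - w i) == - Num.sg (fs (Delta i j))).
(* the r-versions are the same definitions applied to (Er, gs) *)

Definition Ssum {R : realType} {N : nat} (Ea Er : rel 'I_N) (w : 'I_N -> R) (wb : R)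
  (Delta : 'I_N -> 'I_N -> R) (fs gs : R -> R) (i : 'I_N) : R :=
  \sum_(j | Nap Ea w wb Delta fs i j) (fs (Delta i j)) ^+ 2
  + \sum_(j | Nap Er w wb Delta gs i j) (gs (Delta i j)) ^+ 2.

Definition rhs {R : realType} {N : nat} (Ea Er : rel 'I_N)
  (Delta : 'I_N -> 'I_N -> R) (fs gs : R -> R)
  (alpha beta : 'I_N -> 'I_N -> R) (i : 'I_N) : R :=
  \sum_(j | Ea i j) alpha i j * fs (Delta i j)
  + \sum_(j | Er i j) beta i j * gs (Delta i j).

Definition pos_solution {R : realType} {N : nat} (Ea Er : rel 'I_N)
  (w : 'I_N -> R) (wb : R) (Delta : 'I_N -> 'I_N -> R) (fs gs : R -> R)
  (alpha beta : 'I_N -> 'I_N -> R) : Prop :=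
  (forall i j, Ea i j -> 0 < alpha i j) /\
  (forall i j, Er i j -> 0 < beta i j) /\
  (forall i, wb - w i = rhs Ea Er Delta fs gs alpha beta i).

Definition energy {R : realType} {N : nat} (Ea Er : rel 'I_N)
  (alpha beta : 'I_N -> 'I_N -> R) : R :=
  \sum_(i < N) (\sum_(j | Ea i j) (alpha i j) ^+ 2
                + \sum_(j | Er i j) (beta i j) ^+ 2).

Definition E0 {R : realType} {N : nat} (Ea Er : rel 'I_N) (w : 'I_N -> R) (wb : R)
  (Delta : 'I_N -> 'I_N -> R) (fs gs : R -> R) : R :=
  \sum_(i < N) (wb - w i) ^+ 2 / Ssum Ea Er w wb Delta fs gs i.

(* The family alpha^eps (resp. beta^eps, taking (Er, gs)); the value
   outside N_i^{a,+} and N_i^{a,-} is irrelevant (set to 0). *)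
Definition weps {R : realType} {N : nat} (Ea Er : rel 'I_N) (w : 'I_N -> R) (wb : R)
  (Delta : 'I_N -> 'I_N -> R) (fs gs : R -> R) (hs : R -> R) (Eh : rel 'I_N)
  (eps : R) (i j : 'I_N) : R :=
  if Nam Eh w wb Delta hs i j then eps
  else if Nap Eh w wb Delta hs i j then
    `|wb - w i| * `|hs (Delta i j)| / Ssum Ea Er w wb Delta fs gs i
  else 0.

From HB Require Import structures.
From mathcomp Require Import all_boot all_order all_algebra.
From mathcomp Require Import all_classical all_reals all_analysis.
From mathcomp Require Import lra ring.
Import Order.TTheory GRing.Theory Num.Theory.
Import numFieldNormedType.Exports.
Local Open Scope classical_set_scope.
Local Open Scope ring_scope.

(* The equations (star) decouple over the nodes.  Multiplying the i-th one by
   sgn(wb - w_i), every edge of N_i^- contributes non-positively, so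
   |wb - w_i| <= sum_{N_i^+} alpha_ij |f*_ij| + sum_{N_i^+} beta_ij |g*_ij|,
   and completing the square against c = |wb - w_i| / S_i bounds the energy
   at node i below by (wb - w_i)^2 / S_i.  Equality would force zero weights on
   N_i^-, which positivity forbids; weights eps on N_i^- and c |f*_ij|,
   c |g*_ij| on N_i^+ give right-hand side sgn(wb - w_i) (c S_i - eps M_i) and
   energy c^2 S_i + eps^2 K_i (M_i, K_i: mass and number of edges in N_i^-).
   So c = (|wb - w_i| + eps M_i) / S_i yields exact positive solutions and
   c = |wb - w_i| / S_i the family (alpha^eps, beta^eps), both with energy
   E_0 + O(eps).  The values f*(Delta_ij), g*(Delta_ij) are nonzero because a
   coupling function is strictly increasing on the period window around its
   zero. *)

Lemma periodicz {U V : zmodType} {f : U -> V} {T : U} :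
  periodic f T -> forall (k : int) a, f (a + T *~ k) = f a.
Proof.
move=> fT [n|n] a; first exact: periodicn.
by rewrite NegzE mulrNz -[in RHS](subrK (T *+ n.+1) a) periodicn.
Qed.

Section CouplingFunctions.
Context {R : realType}.

Lemma not_0_pi_mod_2pi_subpi (t : R) :
  not_0_pi_mod_2pi t -> not_0_pi_mod_2pi (t - pi).
Proof.
move=> nt k; have [_ tk] := nt k; have [tk1 _] := nt (k + 1).
split=> tpi; [apply: tk | apply: tk1]; rewrite ?intrD; lra.
Qed.

Lemma periodic_increasing_neq0 (h : R -> R) (z t : R) :
  periodic h (2 * pi) ->
  (forall x, x \in `]z - pi, z + pi[ -> derivable h x 1) ->
  (forall x, x \in `]z - pi, z + pi[ -> 0 < derive1 h x) ->
  h z = 0 -> not_0_pi_mod_2pi (t - z) -> h t != 0.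
Proof.
move=> hper hd hpos hz nt.
have pi_gt0 : 0 < (pi : R) := pi_gt0 R.
pose k := Num.floor ((t - (z - pi)) / (2 * pi)).
have /andP[kle klt] := floor_itv ((t - (z - pi)) / (2 * pi)).
rewrite -/k intrD mulr1z ler_pdivlMr ?ltr_pdivrMr ?mulr_gt0 // in kle klt.
set u := t - k%:~R * (2 * pi).
have -> : h t = h u by rewrite -(periodicz hper k u) -mulrzl subrK.
have [tz _] := nt k; have [_ tzpi] := nt (k - 1).
have u_neq_z : u != z by apply/eqP => uz; apply: tz; move: uz; rewrite /u; lra.
have u_gt : z - pi < u.
  rewrite lt_def andbC; apply/andP; split; first by rewrite /u; lra.
  apply/eqP => uz; apply: tzpi; rewrite intrD mulrN1z.
  by move: uz; rewrite /u; lra.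
have u_lt : u < z + pi by rewrite /u; lra.
have incr := gtr0_derive1_lt hd hpos (derivable_within_continuous hd).
have zin : z \in `]z - pi, z + pi[ by rewrite in_itv /=; apply/andP; split; lra.
have uin : u \in `]z - pi, z + pi[ by rewrite in_itv /= u_gt u_lt.
rewrite -hz; move: u_neq_z; rewrite neq_lt => /orP[uz|zu].
- by rewrite lt_eqF // incr.
- by rewrite gt_eqF // incr.
Qed.

Lemma attractive_neq0 (f : R -> R) (t : R) :
  attractive f -> not_0_pi_mod_2pi t -> f t != 0.
Proof.
case=> fper fd f0 fpos _ nt.
apply: (@periodic_increasing_neq0 f 0) => //; last by rewrite subr0.
- by move=> x; rewrite in_itv /= sub0r add0r => /fd [].
- by move=> x; rewrite in_itv /= sub0r add0r => /fpos.
Qed.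

Lemma repulsive_neq0 (g : R -> R) (t : R) :
  repulsive g -> not_0_pi_mod_2pi t -> g t != 0.
Proof.
case=> gper gd gpi gpos _ nt.
apply: (@periodic_increasing_neq0 g pi) => //; last exact: not_0_pi_mod_2pi_subpi.
- by move=> x; rewrite in_itv /= subrr -mulr2n -mulr_natl => /gd [].
- by move=> x; rewrite in_itv /= subrr -mulr2n -mulr_natl => /gpos.
Qed.

End CouplingFunctions.

Section SignSplit.
Context {R : realFieldType} {I : finType}.

Lemma sgr_neq_mulr_le0 (x y : R) : Num.sg x != Num.sg y -> Num.sg x * y <= 0.
Proof.
by case: (ltrgtP x 0) => hx; case: (ltrgtP y 0) => hy;
  rewrite ?(ltr0_sg hx) ?(gtr0_sg hx) ?(ltr0_sg hy) ?(gtr0_sg hy) ?hx ?hy ?sgr0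
    ?eqxx //= => _; lra.
Qed.

Lemma sgr_neq_opp {x y : R} : x != 0 -> y != 0 -> Num.sg x != Num.sg y ->
  Num.sg y = - Num.sg x.
Proof.
by case: (ltrgtP x 0) => hx; case: (ltrgtP y 0) => hy;
  rewrite ?(ltr0_sg hx) ?(gtr0_sg hx) ?(ltr0_sg hy) ?(gtr0_sg hy) ?hx ?hy ?eqxx
    ?opprK.
Qed.

Lemma sum_sqr_gt0 {P : pred I} {b : I -> R} {j : I} :
  P j -> b j != 0 -> 0 < \sum_(k | P k) b k ^+ 2.
Proof.
move=> Pj bj; rewrite (bigD1 j) //= ltr_pwDl ?sumr_ge0 // => [|k _].
  by rewrite lt_def sqrf_eq0 bj sqr_ge0.
exact: sqr_ge0.
Qed.

Lemma sum_sqr_ge_tangent (P : pred I) (x b : I -> R) (c : R) :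
  2 * c * (\sum_(j | P j) x j * b j) - c ^+ 2 * (\sum_(j | P j) b j ^+ 2)
    <= \sum_(j | P j) x j ^+ 2.
Proof.
rewrite -subr_ge0 !mulr_sumr -sumrB -sumrB.
apply: sumr_ge0 => j _.
rewrite (_ : _ - _ = (x j - c * b j) ^+ 2) ?sqr_ge0 //; ring.
Qed.

Variables (P : pred I) (a : I -> R) (d : R).

Local Notation plus j := (P j && (Num.sg d == Num.sg (a j))).
Local Notation minus j := (P j && (Num.sg d != Num.sg (a j))).

Lemma sgr_mul_sum_le (x : I -> R) : (forall j, P j -> 0 <= x j) ->
  Num.sg d * (\sum_(j | P j) x j * a j) <= \sum_(j | plus j) x j * `|a j|.
Proof.
move=> x_ge0; rewrite mulr_sumr (bigID (fun j => Num.sg d == Num.sg (a j))) /=.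
rewrite -[leRHS]addr0; apply: lerD.
- by apply: ler_sum => j /andP[_ /eqP sgj]; rewrite mulrCA sgj -normrEsg.
- apply: sumr_le0 => j /andP[Pj sgj].
  by rewrite mulrCA mulr_ge0_le0 ?x_ge0 ?sgr_neq_mulr_le0.
Qed.

Definition sign_weight (c eps : R) (j : I) : R :=
  if Num.sg d == Num.sg (a j) then c * `|a j| else eps.

Hypothesis a_neq0 : forall j, P j -> a j != 0.
Hypothesis d_neq0 : d != 0.

Lemma sum_sign_weight_mul (c eps : R) :
  \sum_(j | P j) sign_weight c eps j * a j =
  Num.sg d * (c * \sum_(j | plus j) a j ^+ 2 - eps * \sum_(j | minus j) `|a j|).
Proof.
rewrite (bigID (fun j => Num.sg d == Num.sg (a j))) /= mulrBr !mulrA !mulr_sumr.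
rewrite -sumrN; congr (_ + _); apply: eq_bigr => j /andP[Pj sgj]; rewrite /sign_weight.
- by rewrite sgj (eqP sgj) normrEsg; ring.
- rewrite (negbTE sgj) -[in LHS](mulr_sg_norm (a j)).
  by rewrite (sgr_neq_opp d_neq0 (a_neq0 _ Pj) sgj); ring.
Qed.

Lemma sum_sign_weight_sqr (c eps : R) :
  \sum_(j | P j) sign_weight c eps j ^+ 2 =
  c ^+ 2 * \sum_(j | plus j) a j ^+ 2 + eps ^+ 2 * #|[pred j | minus j]|%:R.
Proof.
rewrite (bigID (fun j => Num.sg d == Num.sg (a j))) /= mulr_sumr mulr_natr -sumr_const.
congr (_ + _); apply: eq_bigr => j /andP[Pj sgj]; rewrite /sign_weight.
- by rewrite sgj exprMn real_normK ?num_real.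
- by rewrite (negbTE sgj).
Qed.

End SignSplit.
Arguments sum_sign_weight_mul {R I P a d}.

Lemma cvg_at_right0_quadratic {R : realType} (a b c : R) :
  (a + b * x + c * x ^+ 2) @[x --> 0^'+] --> a.
Proof.
apply: cvg_at_right_filter.
suff H : (a + b * x + c * x ^+ 2) @[x --> (0 : R)] --> a + b * 0 + c * 0 ^+ 2.
  by rewrite mulr0 expr0n /= mulr0 !addr0 in H.
apply: cvgD; first apply: cvgD.
- exact: cvg_cst.
- by apply: cvgMl_tmp; exact: cvg_id.
- by apply: cvgMl_tmp; rewrite expr2; apply: cvgM; exact: cvg_id.
Qed.

Section Network.
Context {R : realType} {N : nat}.
Variables (Ea Er : rel 'I_N) (w : 'I_N -> R) (wb : R)
  (Delta : 'I_N -> 'I_N -> R) (fs gs : R -> R).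
Hypothesis fs_neq0 : forall i j, Ea i j -> fs (Delta i j) != 0.
Hypothesis gs_neq0 : forall i j, Er i j -> gs (Delta i j) != 0.
Hypothesis Nplus_neq0 :
  forall i, exists j, Nap Ea w wb Delta fs i j || Nap Er w wb Delta gs i j.

Local Notation S := (Ssum Ea Er w wb Delta fs gs).
Local Notation e0 := (E0 Ea Er w wb Delta fs gs).
Local Notation solution := (pos_solution Ea Er w wb Delta fs gs).
Local Notation rhs := (rhs Ea Er Delta fs gs).
Local Notation energy := (energy Ea Er).
Local Notation alpha_eps := (weps Ea Er w wb Delta fs gs fs Ea).
Local Notation beta_eps := (weps Ea Er w wb Delta fs gs gs Er).

Lemma gap_neq0 i : wb - w i != 0.
Proof.
have [j /orP[] /andP[Eij /eqP sg_eq]] := Nplus_neq0 i;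
  rewrite -sgr_eq0 sg_eq sgr_eq0; [exact: fs_neq0 | exact: gs_neq0].
Qed.

Lemma Ssum_gt0 i : 0 < S i.
Proof.
have sum_sqr_ge0 (E : rel 'I_N) (h : R -> R) :
    0 <= \sum_(k | Nap E w wb Delta h i k) h (Delta i k) ^+ 2.
  by apply: sumr_ge0 => k _; exact: sqr_ge0.
have [j /orP[] /[dup] Nj /andP[Eij _]] := Nplus_neq0 i; rewrite /Ssum.
- by rewrite ltr_pwDl // (sum_sqr_gt0 Nj) ?fs_neq0.
- by rewrite ltr_pwDr // (sum_sqr_gt0 Nj) ?gs_neq0.
Qed.

Definition split_weights (h : R -> R) (c : 'I_N -> R) (eps : R) (i j : 'I_N) : R :=
  sign_weight (fun j => h (Delta i j)) (wb - w i) (c i) eps j.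

Definition minus_mass i : R :=
  \sum_(j | Ea i j && (Num.sg (wb - w i) != Num.sg (fs (Delta i j))))
     `|fs (Delta i j)|
  + \sum_(j | Er i j && (Num.sg (wb - w i) != Num.sg (gs (Delta i j))))
     `|gs (Delta i j)|.

Definition minus_count i : R :=
  #|[pred j | Ea i j && (Num.sg (wb - w i) != Num.sg (fs (Delta i j)))]|%:R
  + #|[pred j | Er i j && (Num.sg (wb - w i) != Num.sg (gs (Delta i j)))]|%:R.

Lemma split_weights_gt0 {h : R -> R} {Eh : rel 'I_N} c eps :
  (forall i j, Eh i j -> h (Delta i j) != 0) -> (forall i, 0 < c i) -> 0 < eps ->
  forall i j, Eh i j -> 0 < split_weights h c eps i j.
Proof.
move=> h_neq0 c_gt0 eps_gt0 i j Eij; rewrite /split_weights /sign_weight.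
by case: ifP => // _; rewrite mulr_gt0 ?normr_gt0 ?h_neq0.
Qed.

Lemma rhs_split_weights c eps i :
  rhs (split_weights fs c eps) (split_weights gs c eps) i =
  Num.sg (wb - w i) * (c i * S i - eps * minus_mass i).
Proof.
rewrite /rhs /split_weights.
rewrite (sum_sign_weight_mul (fs_neq0 i) (gap_neq0 i)).
rewrite (sum_sign_weight_mul (gs_neq0 i) (gap_neq0 i)) /Ssum /Nap /minus_mass /=.
ring.
Qed.

Lemma energy_split_weights c eps :
  energy (split_weights fs c eps) (split_weights gs c eps) =
  \sum_i (c i ^+ 2 * S i + eps ^+ 2 * minus_count i).
Proof.
apply: eq_bigr => i _; rewrite /split_weights !sum_sign_weight_sqr.
by rewrite /Ssum /Nap /minus_count /=; ring.
Qed.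


Lemma node_energy_ge alpha beta i :
  (forall j, Ea i j -> 0 < alpha i j) -> (forall j, Er i j -> 0 < beta i j) ->
  wb - w i = rhs alpha beta i ->
  (wb - w i) ^+ 2 / S i <=
    \sum_(j | Ea i j) alpha i j ^+ 2 + \sum_(j | Er i j) beta i j ^+ 2.
Proof.
move=> alpha_gt0 beta_gt0 sol.
pose c := `|wb - w i| / S i.
have c_ge0 : 0 <= c by rewrite divr_ge0 // ltW // Ssum_gt0.
have cS : c * S i = `|wb - w i| by rewrite /c divfK // lt0r_neq0 // Ssum_gt0.
have gap_le : `|wb - w i| <=
    \sum_(j | Nap Ea w wb Delta fs i j) alpha i j * `|fs (Delta i j)|
    + \sum_(j | Nap Er w wb Delta gs i j) beta i j * `|gs (Delta i j)|.
  rewrite normrEsg {2}sol mulrDr; apply: lerD; apply: sgr_mul_sum_le => j Eij.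
  - exact: ltW (alpha_gt0 j Eij).
  - exact: ltW (beta_gt0 j Eij).
have tangent (E : rel 'I_N) (h : R -> R) (x : 'I_N -> R) :
    2 * c * (\sum_(j | Nap E w wb Delta h i j) x j * `|h (Delta i j)|)
    - c ^+ 2 * (\sum_(j | Nap E w wb Delta h i j) h (Delta i j) ^+ 2)
    <= \sum_(j | Nap E w wb Delta h i j) x j ^+ 2.
  rewrite [X in c ^+ 2 * X](eq_bigr (fun j => `|h (Delta i j)| ^+ 2)) => [|j _].
    exact: sum_sqr_ge_tangent.
  by rewrite real_normK ?num_real.
have restrict (E : rel 'I_N) (h : R -> R) (x : 'I_N -> R) :
    \sum_(j | Nap E w wb Delta h i j) x j ^+ 2 <= \sum_(j | E i j) x j ^+ 2.
  rewrite [leRHS](bigID (fun j => Num.sg (wb - w i) == Num.sg (h (Delta i j)))) /=.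
  by rewrite lerDl sumr_ge0 // => j _; exact: sqr_ge0.
have -> : (wb - w i) ^+ 2 / S i = c * `|wb - w i|.
  by rewrite -real_normK ?num_real // expr2 mulrAC.
have := ler_wpM2l c_ge0 gap_le; rewrite mulrDr.
have := tangent Ea fs (alpha i); have := tangent Er gs (beta i).
have := restrict Ea fs (alpha i); have := restrict Er gs (beta i).
have : c ^+ 2 * S i = c * `|wb - w i| by rewrite expr2 -mulrA cS.
rewrite /Ssum mulrDr; lra.
Qed.

Lemma energy_ge_E0 alpha beta : solution alpha beta -> e0 <= energy alpha beta.
Proof.
move=> [alpha_gt0 [beta_gt0 sol]]; apply: ler_sum => i _.
exact: node_energy_ge (alpha_gt0 i) (beta_gt0 i) (sol i).
Qed.

Definition exact_scale (eps : R) (i : 'I_N) : R :=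
  (`|wb - w i| + eps * minus_mass i) / S i.

Local Notation alpha_exact eps := (split_weights fs (exact_scale eps) eps).
Local Notation beta_exact eps := (split_weights gs (exact_scale eps) eps).

Lemma minus_mass_ge0 i : 0 <= minus_mass i.
Proof. by rewrite addr_ge0 // sumr_ge0. Qed.

Lemma exact_weights_solution eps : 0 < eps ->
  solution (alpha_exact eps) (beta_exact eps).
Proof.
move=> eps_gt0; have c_gt0 i : 0 < exact_scale eps i.
  rewrite divr_gt0 ?Ssum_gt0 // ltr_pwDl ?normr_gt0 ?gap_neq0 //.
  by rewrite mulr_ge0 ?minus_mass_ge0 // ltW.
split; [exact: split_weights_gt0|split; first exact: split_weights_gt0].
move=> i; rewrite rhs_split_weights /exact_scale divfK ?lt0r_neq0 ?Ssum_gt0 //.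
by rewrite addrK mulr_sg_norm.
Qed.

Lemma exists_pos_solution : exists alpha beta, solution alpha beta.
Proof. by exists (alpha_exact 1), (beta_exact 1); exact: exact_weights_solution. Qed.

Lemma energy_exact_weights_cvg :
  energy (alpha_exact eps) (beta_exact eps) @[eps --> 0^'+] --> e0.
Proof.
have S_neq0 i : S i != 0 by rewrite lt0r_neq0 ?Ssum_gt0.
pose b := \sum_i 2 * `|wb - w i| * minus_mass i / S i.
pose c := \sum_i (minus_mass i ^+ 2 / S i + minus_count i).
suff -> : (fun eps => energy (alpha_exact eps) (beta_exact eps)) =
    (fun eps => e0 + b * eps + c * eps ^+ 2) by exact: cvg_at_right0_quadratic.
apply: funext => eps; rewrite energy_split_weights /E0 /b /c !mulr_suml.
rewrite -!big_split /=; apply: eq_bigr => i _.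
rewrite /exact_scale -[(wb - w i) ^+ 2]real_normK ?num_real //.
by field.
Qed.

Lemma inf_energy :
  inf [set x | exists alpha beta, solution alpha beta /\ x = energy alpha beta] = e0.
Proof.
set X := [set x | _].
have X_lb : lbound X e0 by move=> _ [alpha [beta [sol ->]]]; exact: energy_ge_E0.
have X_exact eps : 0 < eps -> X (energy (alpha_exact eps) (beta_exact eps)).
  by move=> eps_gt0; exists (alpha_exact eps), (beta_exact eps); split;
    first exact: exact_weights_solution.
apply/eqP; rewrite eq_le; apply/andP; split; last first.
  apply: lb_le_inf X_lb.
  by exists (energy (alpha_exact 1) (beta_exact 1)); exact: X_exact.
apply: (ler_cvg_to (cvg_cst _) energy_exact_weights_cvg).
near=> eps; apply: ge_inf; first by exists e0.
by apply: X_exact; near: eps; exact: nbhs_right_gt.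
Unshelve. all: by end_near.
Qed.

Lemma weps_split_weights {h : R -> R} {Eh : rel 'I_N} :
  (forall i j, Eh i j -> h (Delta i j) != 0) -> forall eps i j, Eh i j ->
  weps Ea Er w wb Delta fs gs h Eh eps i j =
  split_weights h (fun i => `|wb - w i| / S i) eps i j.
Proof.
move=> h_neq0 eps i j Eij; have hij := h_neq0 i j Eij.
rewrite /weps /Nam /Nap /split_weights /sign_weight Eij /=.
have [sg_eq|sg_neq] := eqVneq (Num.sg (wb - w i)) (Num.sg (h (Delta i j))).
- rewrite sg_eq -addr_eq0 -mulr2n mulrn_eq0 /= sgr_eq0 (negbTE hij) /=.
  by rewrite mulrAC.
- by rewrite (sgr_neq_opp (gap_neq0 i) hij sg_neq) opprK eqxx.
Qed.

Local Notation scale0 := (fun i => `|wb - w i| / S i).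

Lemma rhs_weps eps i :
  rhs (alpha_eps eps) (beta_eps eps) i =
  Num.sg (wb - w i) * (`|wb - w i| - eps * minus_mass i).
Proof.
transitivity (rhs (split_weights fs scale0 eps) (split_weights gs scale0 eps) i).
  by rewrite /rhs; congr (_ + _); apply: eq_bigr => j Eij;
    rewrite ?(weps_split_weights fs_neq0) ?(weps_split_weights gs_neq0).
by rewrite rhs_split_weights divfK // lt0r_neq0 ?Ssum_gt0.
Qed.

Lemma energy_weps eps :
  energy (alpha_eps eps) (beta_eps eps) = e0 + (\sum_i minus_count i) * eps ^+ 2.
Proof.
transitivity (energy (split_weights fs scale0 eps) (split_weights gs scale0 eps)).
  by apply: eq_bigr => i _; congr (_ + _); apply: eq_bigr => j Eij;
    rewrite ?(weps_split_weights fs_neq0) ?(weps_split_weights gs_neq0).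
rewrite energy_split_weights /E0 mulr_suml -big_split /=; apply: eq_bigr => i _.
rewrite -[(wb - w i) ^+ 2]real_normK ?num_real //.
by field; rewrite lt0r_neq0 ?Ssum_gt0.
Qed.

Lemma weps_gt0 eps : 0 < eps ->
  (forall i j, Ea i j -> 0 < alpha_eps eps i j) /\
  (forall i j, Er i j -> 0 < beta_eps eps i j).
Proof.
move=> eps_gt0; have scale0_gt0 i : 0 < scale0 i.
  by rewrite divr_gt0 ?normr_gt0 ?gap_neq0 ?Ssum_gt0.
split=> i j Eij.
- by rewrite (weps_split_weights fs_neq0) //; exact: (split_weights_gt0 _ _ fs_neq0).
- by rewrite (weps_split_weights gs_neq0) //; exact: (split_weights_gt0 _ _ gs_neq0).
Qed.

Lemma residual_weps_cvg i :
  (wb - w i - rhs (alpha_eps eps) (beta_eps eps) i) @[eps --> 0^'+] --> 0.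
Proof.
suff -> : (fun eps => wb - w i - rhs (alpha_eps eps) (beta_eps eps) i) =
    (fun eps => 0 + Num.sg (wb - w i) * minus_mass i * eps + 0 * eps ^+ 2).
  exact: cvg_at_right0_quadratic.
by apply: funext => eps; rewrite rhs_weps mulrBr mulr_sg_norm; ring.
Qed.

Lemma energy_weps_cvg :
  energy (alpha_eps eps) (beta_eps eps) @[eps --> 0^'+] --> e0.
Proof.
suff -> : (fun eps => energy (alpha_eps eps) (beta_eps eps)) =
    (fun eps => e0 + 0 * eps + (\sum_i minus_count i) * eps ^+ 2).
  exact: cvg_at_right0_quadratic.
by apply: funext => eps; rewrite energy_weps mul0r addr0.
Qed.

End Network.

Theorem theorem4 (R : realType) (N : nat) (E Ea Er : rel 'I_N)
  (w : 'I_N -> R) (Delta : 'I_N -> 'I_N -> R) (wb : R) (fs gs : R -> R) :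
  undirected_graph E -> connected_graph E ->
  formation E Delta ->
  (forall i j, E i j -> not_0_pi_mod_2pi (Delta i j)) ->
  (* partition E = E^a disjoint-union E^r *)
  (forall i j, E i j = Ea i j || Er i j) ->
  (forall i j, ~~ (Ea i j && Er i j)) ->
  attractive fs -> repulsive gs ->
  (* N_i^+ = N_i^{a,+} U N_i^{r,+} is non-empty for every i *)
  (forall i, exists j, Nap Ea w wb Delta fs i j || Nap Er w wb Delta gs i j) ->
  let alpha_eps := weps Ea Er w wb Delta fs gs fs Ea in
  let beta_eps := weps Ea Er w wb Delta fs gs gs Er in
  let e0 := E0 Ea Er w wb Delta fs gs in
  (* (i) *)
  (exists alpha beta, pos_solution Ea Er w wb Delta fs gs alpha beta) /\
  (* (ii) *)
  (forall alpha beta, pos_solution Ea Er w wb Delta fs gs alpha beta ->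
     e0 <= energy Ea Er alpha beta) /\
  inf [set x | exists alpha beta,
          pos_solution Ea Er w wb Delta fs gs alpha beta /\
          x = energy Ea Er alpha beta] = e0 /\
  (forall eps, 0 < eps ->
     (forall i j, Ea i j -> 0 < alpha_eps eps i j) /\
     (forall i j, Er i j -> 0 < beta_eps eps i j)) /\
  (forall i, (wb - w i - rhs Ea Er Delta fs gs (alpha_eps eps) (beta_eps eps) i)
               @[eps --> 0^'+] --> 0) /\
  energy Ea Er (alpha_eps eps) (beta_eps eps) @[eps --> 0^'+] --> e0.
Proof.
move=> _ _ _ Delta_ok partition _ fs_attractive gs_repulsive Nplus_neq0 ? ? ?.
have fs_neq0 i j : Ea i j -> fs (Delta i j) != 0.
  by move=> Eij; apply: attractive_neq0 fs_attractive (Delta_ok _ _ _);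
    rewrite partition Eij.
have gs_neq0 i j : Er i j -> gs (Delta i j) != 0.
  by move=> Eij; apply: repulsive_neq0 gs_repulsive (Delta_ok _ _ _);
    rewrite partition Eij orbT.
split; first exact: exists_pos_solution.
split; first by move=> alpha beta; apply: energy_ge_E0.
split; first exact: inf_energy.
split; first exact: weps_gt0.
by split; [move=> i; exact: residual_weps_cvg | exact: energy_weps_cvg].
Qed.
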